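(* Let $A$ be a general metric space, let $(x_n)$ and $(y_n)$ be weakly flat sequences in $A$ and let $\mathcal F$ be a flat filter on $A$ with $(x_n)\to\mathcal F$ and $(y_n)\to\mathcal F$. Then there exists a forward Cauchy sequence $(z_n)$ in $A$ such that $(x_n)\to(z_n)$, $(y_n)\to(z_n)$ and $(z_n)\to\mathcal F$.
   Context: A general metric space $A$ is a set with $A(-,-):A\times A\to[0,\infty]$, $A(x,x)=0$, $A(x,z)\le A(x,y)+A(y,z)$. A filter on $A$ is a nonempty set of nonempty subsets closed under finite intersections and supersets. $\mathcal F$ is weakly flat iff for every $\epsilon>0$ there is $f\in\mathcal F$ such that for all $x\in f$ and all $g\in\mathcal F$ there is $y\in g$ with $A(x,y)\le\epsilon$; flat iff for every $\epsilon>0$ there is $f\in\mathcal F$ such that for every finite family $x_1,\dots,x_n\in f$ and every $g\in\mathcal F$ there is $y\in g$ with $A(x_i,y)\le\epsilon$ for all $i$. For weakly flat filters, $\mathcal F_1\to\mathcal F_2$ iff for every $\epsilon>0$ there is $f\in\mathcal F_1$ such that for every $x\in f$ and every $g\in\mathcal F_2$ there is $y\in g$ with $A(x,y)\le\epsilon$. A sequence is identified with its filter, generated by the tails $\{x_p:p\ge n\}$; a sequence is weakly flat if its filter is. $(z_n)$ is forward Cauchy iff for every $\epsilon>0$ there is $N$ with $A(z_n,z_m)\le\epsilon$ whenever $m\ge n\ge N$. *)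

From Stdlib Require Import Reals.
From Coquelicot Require Import Coquelicot.
Open Scope R_scope.

Record GenMetric (X : Type) (d : X -> X -> Rbar) : Prop := {
  gm_nonneg : forall x y, Rbar_le (Finite 0) (d x y);
  gm_refl : forall x, d x x = Finite 0;
  gm_triangle : forall x y z, Rbar_le (d x z) (Rbar_plus (d x y) (d y z))
}.

Record IsFilter (X : Type) (F : (X -> Prop) -> Prop) : Prop := {
  fil_nonempty : exists f, F f;
  fil_members_nonempty : forall f, F f -> exists x, f x;
  fil_inter : forall f g, F f -> F g -> F (fun x => f x /\ g x);
  fil_super : forall f g : X -> Prop, F f -> (forall x, f x -> g x) -> F g
}.

Definition dle {X} (d : X -> X -> Rbar) x y (eps : R) := Rbar_le (d x y) (Finite eps).

Definition weakly_flat {X} (d : X -> X -> Rbar) (F : (X -> Prop) -> Prop) : Prop :=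
  forall eps, 0 < eps -> exists f, F f /\
    forall x, f x -> forall g, F g -> exists y, g y /\ dle d x y eps.

Definition flat {X} (d : X -> X -> Rbar) (F : (X -> Prop) -> Prop) : Prop :=
  forall eps, 0 < eps -> exists f, F f /\
    forall xs : list X, (forall x, List.In x xs -> f x) ->
    forall g, F g -> exists y, g y /\ forall x, List.In x xs -> dle d x y eps.

Definition fconv {X} (d : X -> X -> Rbar) (F1 F2 : (X -> Prop) -> Prop) : Prop :=
  forall eps, 0 < eps -> exists f, F1 f /\
    forall x, f x -> forall g, F2 g -> exists y, g y /\ dle d x y eps.

Definition seq_filter {X} (x : nat -> X) : (X -> Prop) -> Prop :=
  fun f => exists n, forall p, (n <= p)%nat -> f (x p).

Definition forward_cauchy {X} (d : X -> X -> Rbar) (z : nat -> X) : Prop :=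
  forall eps, 0 < eps -> exists N, forall n m, (N <= n)%nat -> (n <= m)%nat ->
    dle d (z n) (z m) eps.

(* Fix members f_k of F that are flat at tolerance 2^-k.  The sequence z is
   built recursively with z_m in f_(m+1), within 2^-m of z_(m-1) and of
   finitely many points of f_m that approximate the first m terms of the
   first m sequences as well as f_m allows; flatness of f_m provides such a
   z_m.  This works for countably many sequences at once.
   The steps d(z_m, z_(m+1)) <= 2^-(m+1) make z forward Cauchy, membership
   z_m in f_(m+1) gives z --> F, and a term u_p of a sequence converging to
   F reaches some point of every f_m, hence reaches z_m through the chosen
   approximant. *)

From Stdlib Require Import Reals.
From Coquelicot Require Import Coquelicot.
From Stdlib Require Import ClassicalEpsilon List Lra Lia.
Open Scope R_scope.

Definition half_pow (k : nat) : R := (/ 2) ^ k.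

Lemma half_pow_gt0 k : 0 < half_pow k.
Proof. apply pow_lt; lra. Qed.

Lemma half_powS k : half_pow (S k) = / 2 * half_pow k.
Proof. reflexivity. Qed.

Lemma half_pow_le k n : (k <= n)%nat -> half_pow n <= half_pow k.
Proof.
  induction 1 as [|n _ IH]; [lra|].
  rewrite half_powS; pose proof (half_pow_gt0 n); lra.
Qed.

Lemma half_pow_small e : 0 < e -> exists k, half_pow k <= e.
Proof.
  intros He.
  destruct (pow_lt_1_zero (/ 2)) with (y := e) as [N HN]; auto.
  { rewrite Rabs_pos_eq; lra. }
  exists N; specialize (HN N (le_n N)).
  rewrite Rabs_pos_eq in HN by (apply pow_le; lra).
  unfold half_pow; lra.
Qed.

Lemma choice_preferring (A X : Type) (S R : A -> X -> Prop) :
  (forall i, exists w, S i w) ->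
  exists c : A -> X, forall i, S i (c i) /\ ((exists w, S i w /\ R i w) -> R i (c i)).
Proof.
  intros HS.
  apply (choice (fun i w => S i w /\ ((exists w, S i w /\ R i w) -> R i w))).
  intros i.
  destruct (classic (exists w, S i w /\ R i w)) as [[w Hw] | Hno].
  - exists w; tauto.
  - destruct (HS i) as [w Hw]; exists w; tauto.
Qed.

Lemma dependent_choice_seq (X : Type) (Q : nat -> X -> Prop) (R : nat -> X -> X -> Prop) :
  (exists w, Q 0%nat w) ->
  (forall m w, Q m w -> exists w', Q (S m) w' /\ R m w w') ->
  exists z : nat -> X, forall m, Q m (z m) /\ R m (z m) (z (S m)).
Proof.
  intros [w0 Hw0] Hstep.
  (* Off Q the step is irrelevant, so w itself serves as a witness there. *)
  assert (Htotal : forall mw : nat * X, exists w',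
            Q (fst mw) (snd mw) -> Q (S (fst mw)) w' /\ R (fst mw) (snd mw) w').
  { intros [m w].
    destruct (classic (Q m w)) as [Hq | Hq].
    - destruct (Hstep m w Hq) as [w' Hw']; exists w'; auto.
    - exists w; simpl; tauto. }
  destruct (choice _ Htotal) as [next Hnext].
  set (z := fix z m := match m with O => w0 | S m' => next (m', z m') end).
  assert (Hq : forall m, Q m (z m)).
  { induction m as [|m IH]; [exact Hw0|].
    exact (proj1 (Hnext (m, z m) IH)). }
  exists z; intros m; split; [apply Hq|].
  exact (proj2 (Hnext (m, z m) (Hq m))).
Qed.

Section Distances.

Variables (X : Type) (d : X -> X -> Rbar).
Hypothesis HA : GenMetric X d.

Lemma dle_weaken a b e1 e2 : dle d a b e1 -> e1 <= e2 -> dle d a b e2.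
Proof. intros H1 H2; eapply Rbar_le_trans; [exact H1|exact H2]. Qed.

Lemma dle_refl a e : 0 <= e -> dle d a a e.
Proof. intros He; unfold dle; rewrite (gm_refl _ _ HA); exact He. Qed.

Lemma dle_trans a b c e1 e2 : dle d a b e1 -> dle d b c e2 -> dle d a c (e1 + e2).
Proof.
  unfold dle; intros H1 H2.
  eapply Rbar_le_trans; [apply (gm_triangle _ _ HA a b c)|].
  pose proof (gm_nonneg _ _ HA a b); pose proof (gm_nonneg _ _ HA b c).
  destruct (d a b), (d b c); simpl in *; try contradiction; lra.
Qed.

Lemma dle_geometric_steps (z : nat -> X) :
  (forall m, dle d (z m) (z (S m)) (half_pow (S m))) ->
  forall n j, dle d (z n) (z (n + j)%nat) (half_pow n - half_pow (n + j)).
Proof.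
  intros Hstep n j; induction j as [|j IH].
  - rewrite Nat.add_0_r; apply dle_refl; lra.
  - rewrite Nat.add_succ_r.
    replace (half_pow n - half_pow (S (n + j)))
      with ((half_pow n - half_pow (n + j)) + half_pow (S (n + j)))
      by (rewrite half_powS; lra).
    eapply dle_trans; [exact IH|apply Hstep].
Qed.

Lemma forward_cauchy_geometric_steps (z : nat -> X) :
  (forall m, dle d (z m) (z (S m)) (half_pow (S m))) -> forward_cauchy d z.
Proof.
  intros Hstep e He.
  destruct (half_pow_small e He) as [N HN]; exists N.
  intros n m Hn Hm.
  replace m with (n + (m - n))%nat by lia.
  eapply dle_weaken; [apply dle_geometric_steps, Hstep|].
  pose proof (half_pow_gt0 (n + (m - n))); pose proof (half_pow_le N n Hn); lra.
Qed.

Definition flat_at (F : (X -> Prop) -> Prop) (eps : R) (f : X -> Prop) : Prop :=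
  forall xs : list X, (forall a, In a xs -> f a) ->
  forall g, F g -> exists b, g b /\ forall a, In a xs -> dle d a b eps.

Lemma flat_members (F : (X -> Prop) -> Prop) :
  flat d F -> exists fs : nat -> X -> Prop,
    forall k, F (fs k) /\ flat_at F (half_pow k) (fs k).
Proof.
  intros HFf.
  apply (choice (fun k f => F f /\ flat_at F (half_pow k) f)).
  intros k; exact (HFf _ (half_pow_gt0 k)).
Qed.

Section FlatChain.

Variable F : (X -> Prop) -> Prop.
Variable fs : nat -> X -> Prop.
Hypothesis fs_in : forall k, F (fs k).
Hypothesis fs_flat : forall k, flat_at F (half_pow k) (fs k).

Lemma flat_chain (L : nat -> list X) :
  (forall m a, In a (L m) -> fs m a) ->
  exists z : nat -> X, forall m,
    (fs (S m) (z m) /\ forall a, In a (L m) -> dle d a (z m) (half_pow m)) /\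
    dle d (z m) (z (S m)) (half_pow (S m)).
Proof.
  intros HL.
  apply (dependent_choice_seq X
           (fun m w => fs (S m) w /\ forall a, In a (L m) -> dle d a w (half_pow m))
           (fun m w w' => dle d w w' (half_pow (S m)))).
  - destruct (fs_flat 0 (L 0%nat) (HL 0%nat) _ (fs_in 1)) as [w Hw]; exists w; exact Hw.
  - intros m w [Hw _].
    destruct (fs_flat (S m) (w :: L (S m))) with (g := fs (S (S m)))
      as [w' [Hw'f Hw'L]]; auto.
    + intros a [<- | Ha]; auto.
    + exists w'; repeat split; auto.
      * intros a Ha; apply Hw'L; right; exact Ha.
      * apply Hw'L; left; reflexivity.
Qed.

Lemma chain_fconv (z : nat -> X) :
  (forall m, fs (S m) (z m)) -> fconv d (seq_filter z) F.
Proof.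
  intros Hz e He.
  destruct (half_pow_small e He) as [k Hk].
  exists (fun a => exists n, (k <= n)%nat /\ a = z n); split.
  - exists k; intros p Hp; eauto.
  - intros a [n [Hn ->]] g Hg.
    destruct (fs_flat (S n) (z n :: nil)) with (g := g) as [b [Hb Hnb]]; auto.
    { intros a [<- | []]; apply Hz. }
    exists b; split; [exact Hb|].
    eapply dle_weaken; [apply Hnb; left; reflexivity|].
    pose proof (half_pow_le k (S n) ltac:(lia)); lra.
Qed.

Lemma fconv_to_chain (u : nat -> X) (c : nat -> nat -> nat -> X) (z : nat -> X) :
  fconv d (seq_filter u) F ->
  (forall p k m, (exists w, fs m w /\ dle d (u p) w (half_pow k)) ->
     dle d (u p) (c p k m) (half_pow k)) ->
  (exists m0, forall p k m, (m0 + p + k <= m)%nat -> dle d (c p k m) (z m) (half_pow m)) ->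
  fconv d (seq_filter u) (seq_filter z).
Proof.
  intros HuF Hc [m0 Hz] e He.
  destruct (half_pow_small (e / 2)) as [k Hk]; [lra|].
  destruct (HuF _ (half_pow_gt0 k)) as [f0 [[N HN] Hf0]].
  exists (fun a => exists p, (N <= p)%nat /\ a = u p); split.
  - exists N; intros p Hp; eauto.
  - intros a [p [Hp ->]] g [M HM].
    set (m := (m0 + M + p + k)%nat).
    exists (z m); split; [apply HM; unfold m; lia|].
    assert (Hup : dle d (u p) (c p k m) (half_pow k)) by (apply Hc, Hf0; auto).
    eapply dle_weaken; [eapply dle_trans; [exact Hup | apply Hz; unfold m; lia]|].
    pose proof (half_pow_le k m ltac:(unfold m; lia)); lra.
Qed.

End FlatChain.

Definition cube (m : nat) : list (nat * nat * nat) :=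
  list_prod (list_prod (seq 0 (S m)) (seq 0 (S m))) (seq 0 (S m)).

Lemma in_cube j p k m :
  (j <= m)%nat -> (p <= m)%nat -> (k <= m)%nat -> In (j, p, k) (cube m).
Proof. intros; repeat apply in_prod; apply in_seq; lia. Qed.

Theorem flat_filter_common_cauchy (u : nat -> nat -> X) (F : (X -> Prop) -> Prop) :
  IsFilter X F -> flat d F -> (forall j, fconv d (seq_filter (u j)) F) ->
  exists z : nat -> X, forward_cauchy d z /\
    (forall j, fconv d (seq_filter (u j)) (seq_filter z)) /\
    fconv d (seq_filter z) F.
Proof.
  intros HF HFf HuF.
  destruct (flat_members F HFf) as [fs Hfs].
  assert (fs_in : forall k, F (fs k)) by (intros k; apply Hfs).
  assert (fs_flat : forall k, flat_at F (half_pow k) (fs k)) by (intros k; apply Hfs).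
  destruct (choice_preferring (nat * nat * nat * nat) X
              (fun i w => fs (snd i) w)
              (fun '(j, p, k, _) w => dle d (u j p) w (half_pow k))) as [c Hc].
  { intros i; exact (fil_members_nonempty _ _ HF _ (fs_in (snd i))). }
  set (L m := map (fun t => c (t, m)) (cube m)).
  destruct (flat_chain F fs fs_in fs_flat L)
    as [z Hz].
  { intros m a Ha; apply in_map_iff in Ha as [t [<- _]]; apply (Hc (t, m)). }
  exists z; repeat split.
  - apply forward_cauchy_geometric_steps; intros m; apply Hz.
  - intros j.
    apply (fconv_to_chain F fs fs_in (u j) (fun p k m => c (j, p, k, m))); auto.
    + intros p k m; apply (Hc (j, p, k, m)).
    + exists j; intros p k m Hm; apply Hz, in_map_iff.
      exists (j, p, k); split; [reflexivity|apply in_cube; lia].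
  - apply (chain_fconv F fs fs_flat); intros m; apply Hz.
Qed.

End Distances.

(* Weak flatness of (x_n) and (y_n) only makes their convergence to F meaningful;
   the construction does not use it. *)
Theorem mainTheorem14 (X : Type) (d : X -> X -> Rbar) (HA : GenMetric X d)
  (x y : nat -> X) (F : (X -> Prop) -> Prop) (HF : IsFilter X F)
  (Hx : weakly_flat d (seq_filter x)) (Hy : weakly_flat d (seq_filter y))
  (HFf : flat d F)
  (HxF : fconv d (seq_filter x) F) (HyF : fconv d (seq_filter y) F) :
  exists z : nat -> X, forward_cauchy d z /\
    fconv d (seq_filter x) (seq_filter z) /\
    fconv d (seq_filter y) (seq_filter z) /\
    fconv d (seq_filter z) F.
Proof.
  set (u j := match j with O => x | S _ => y end).
  destruct (flat_filter_common_cauchy X d HA u F HF HFf) as [z [Hz [Huz HzF]]].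
  { intros [|j]; assumption. }
  exists z; repeat split; auto.
  - exact (Huz 0%nat).
  - exact (Huz 1%nat).
Qed.
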